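(* Let $F\in\mathcal S^\sharp$ and $C>0$. There is a constant $K>0$ (depending on $C$ and $F$) such that for all $t\in[-C,0)$ and all $x\in\mathbb R$, \[ \widetilde{F_t}(x)\le K\exp\!\Bigl(\tfrac{10}{|t|}\min(x,-2)^2\Bigr). \] In particular $|F_t(x+iy)|\le K\exp\!\bigl(\tfrac{10}{|t|}\min(x,-2)^2\bigr)$ for all $x,y\in\mathbb R$.
   Context: The extended Selberg class $\mathcal S^\sharp$ is the set of functions $F$, not identically zero, such that: (i) $F(s)=\sum_{n\ge1}a_n n^{-s}$, with the series converging absolutely for $\Re s>1$; (ii) $(s-1)^mF(s)$ extends to an entire function of finite order for some integer $m\ge0$; (iii) letting $m$ be the order of the pole of $F$ at $s=1$ ($m=0$ if there is no pole), there is a function $\gamma(s)=\alpha s^m(s-1)^mQ^s\prod_{i=1}^k\Gamma(\omega_i s+\mu_i)$ with $\alpha\in\mathbb C\setminus\{0\}$, $Q>0$, an integer $k\ge1$, $\omega_i>0$ and $\mu_i\in\mathbb C$ with $\Re\mu_i\ge0$, such that the (entire) function $\xi^F(s):=\gamma(s)F(s)$ satisfies $\xi^F(s)=\overline{\xi^F(1-\bar s)}$ for all $s$. For $t<0$: $F_t(s):=\sum_{n\ge1}\exp\!\left(-\frac{|t|}{4}\log^2 n\right)a_n n^{-s}$ and $\widetilde{F_t}(x):=\sum_{n\ge1}\exp\!\left(-\frac{|t|}{4}\log^2 n\right)|a_n| n^{-x}$ for $x\in\mathbb R$. *)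

From Stdlib Require Import Reals Factorial List.
From Coquelicot Require Import Coquelicot.
Open Scope R_scope.

Definition cexp (z : C) : C :=
  (exp (Re z) * cos (Im z), exp (Re z) * sin (Im z)).

(** [cpow_pos b z] = b^z := exp(z log b) for a real b > 0. *)
Definition cpow_pos (b : R) (z : C) : C := cexp (z * RtoC (ln b))%C.

Definition entire (f : C -> C) : Prop :=
  forall z : C, @ex_derive C_AbsRing C_NormedModule f z.

Definition finite_order (f : C -> C) : Prop :=
  exists rho R0 : R, 0 < rho /\
    forall s : C, R0 <= Cmod s -> Cmod (f s) <= exp (Rpower (Cmod s) rho).

(** Complex Gamma function, via Euler's limit formula:
    Gamma z = lim_{n->oo} n^z n! / (z (z+1) ... (z+n)),
    valid for z not a non-positive integer. [is_Gamma z w] says this limit is w. *)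
Definition Euler_Gamma_seq (z : C) (n : nat) : C :=
  (cpow_pos (INR n) z * RtoC (INR (fact n)) /
     fold_right Cmult (RtoC 1) (map (fun j => z + RtoC (INR j)) (seq 0 (S n))))%C.

Definition is_Gamma (z w : C) : Prop :=
  filterlim (Euler_Gamma_seq z) eventually (@locally C_UniformSpace w).

Definition nonpos_integer (z : C) : Prop := exists k : nat, z = RtoC (- INR k).

(** Dirichlet series F(s) = sum_{n>=1} a_n n^{-s}; the coefficient a_n is [a n]
    for n >= 1 ([a 0] is ignored). [dirichlet_term a s n] is the (n+1)-th term. *)
Definition dirichlet_term (a : nat -> C) (s : C) (n : nat) : C :=
  (a (S n) * cpow_pos (INR (S n)) (- s))%C.

Definition is_dirichlet_sum (a : nat -> C) (s v : C) : Prop :=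
  @is_series C_AbsRing C_NormedModule (dirichlet_term a s) v.

Definition in_Selberg_ext (a : nat -> C) : Prop :=
  (forall s : C, 1 < Re s ->
     ex_series (fun n => Cmod (dirichlet_term a s n))) /\
  (exists s v : C, 1 < Re s /\ is_dirichlet_sum a s v /\ v <> RtoC 0) /\
  exists (m : nat) (G : C -> C),
    (* G is the entire finite-order extension of (s-1)^m F(s) *)
    entire G /\ finite_order G /\
    (forall s v : C, 1 < Re s -> is_dirichlet_sum a s v ->
       G s = (Cpow (s - RtoC 1) m * v)%C) /\
    (* m is the order of the pole of F at s = 1 *)
    (m = 0%nat \/ G (RtoC 1) <> RtoC 0) /\
    exists (alpha : C) (Q : R) (k : nat) (omega : nat -> R) (mu : nat -> C)
           (Xi : C -> C),
      alpha <> RtoC 0 /\ 0 < Q /\ (1 <= k)%nat /\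
      (forall i, (i < k)%nat -> 0 < omega i) /\
      (forall i, (i < k)%nat -> 0 <= Re (mu i)) /\
      entire Xi /\
      (* Xi(s) = gamma(s) F(s) with gamma(s) = alpha s^m (s-1)^m Q^s prod Gamma(omega_i s + mu_i),
         expressed through G(s) = (s-1)^m F(s), away from the poles of the Gamma factors *)
      (forall (s : C) (w : nat -> C),
         (forall i, (i < k)%nat -> ~ nonpos_integer (RtoC (omega i) * s + mu i)%C) ->
         (forall i, (i < k)%nat -> is_Gamma (RtoC (omega i) * s + mu i)%C (w i)) ->
         Xi s = (alpha * Cpow s m * cpow_pos Q s *
                 fold_right Cmult (RtoC 1) (map w (seq 0 k)) * G s)%C) /\
      (forall s : C, Xi s = Cconj (Xi (RtoC 1 - Cconj s)%C)).

Definition Ft_term (a : nat -> C) (t : R) (s : C) (n : nat) : C :=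
  (RtoC (exp (- (Rabs t / 4) * (ln (INR (S n)))^2)) * dirichlet_term a s n)%C.

Definition Ftilde_term (a : nat -> C) (t x : R) (n : nat) : R :=
  exp (- (Rabs t / 4) * (ln (INR (S n)))^2) * Cmod (a (S n)) * Rpower (INR (S n)) (- x).

Definition Ftilde (a : nat -> C) (t x : R) : R := Series (Ftilde_term a t x).

From Stdlib Require Import Reals Lra Psatz.
From Coquelicot Require Import Coquelicot.
Open Scope R_scope.

(* Writing
   L = log n >= 0 and u = |t| > 0, the weight of the n-th term of F~_t(x) is
       exp(-(u/4) L^2 - x L),
   and completing the square gives the elementary bound
       -(u/4) L^2 - x L <= -2 L + (10/u) min(x,-2)^2,
   i.e. each term of F~_t(x) is at most exp((10/u) min(x,-2)^2) |a_n| n^{-2}.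
   Summing, F~_t(x) <= K exp((10/u) min(x,-2)^2) with K = max(1, sum |a_n| n^{-2}),
   uniformly in t < 0.  Since |n-th term of F_t(x+iy)| equals the n-th term of
   F~_t(x), the series F_t(x+iy) converges absolutely and its modulus obeys the
   same bound. *)

Lemma Cmod_cexp (z : C) : Cmod (cexp z) = exp (Re z).
Proof.
  unfold cexp, Cmod; simpl.
  replace (exp (Re z) * cos (Im z) * (exp (Re z) * cos (Im z) * 1) +
           exp (Re z) * sin (Im z) * (exp (Re z) * sin (Im z) * 1))
    with (exp (Re z) * exp (Re z) * (Rsqr (sin (Im z)) + Rsqr (cos (Im z))))
    by (unfold Rsqr; ring).
  rewrite sin2_cos2, Rmult_1_r.
  apply sqrt_square. left; apply exp_pos.
Qed.

Lemma Cmod_cpow_pos (b : R) (z : C) : Cmod (cpow_pos b z) = exp (Re z * ln b).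
Proof. unfold cpow_pos. rewrite Cmod_cexp. f_equal. destruct z; simpl; ring. Qed.

Lemma Cmod_dirichlet_term (a : nat -> C) (x y : R) (n : nat) :
  Cmod (dirichlet_term a (x, y) n) = Cmod (a (S n)) * Rpower (INR (S n)) (- x).
Proof. unfold dirichlet_term. rewrite Cmod_mult, Cmod_cpow_pos. reflexivity. Qed.

Lemma Cmod_Ft_term (a : nat -> C) (t x y : R) (n : nat) :
  Cmod (Ft_term a t (x, y) n) = Ftilde_term a t x n.
Proof.
  unfold Ft_term, Ftilde_term.
  rewrite Cmod_mult, Cmod_R, Cmod_dirichlet_term, Rabs_pos_eq by (left; apply exp_pos).
  ring.
Qed.

(* The elementary inequality: for u > 0 and L >= 0,
   -(u/4) L^2 - x L <= -2 L + (10/u) min(x,-2)^2.  For x < 2 it follows from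
   -(u/4)L^2 - xL = -2L - (uL/2 + (x-2))^2/u + (x-2)^2/u and (x-2)^2 <= 10 min(x,-2)^2;
   for x >= 2 the left side is already at most -2L. *)
Lemma gaussian_exponent_bound (u L x : R) : 0 < u -> 0 <= L ->
  - (u / 4) * L ^ 2 + - x * L <= - 2 * L + 10 / u * (Rmin x (-2)) ^ 2.
Proof.
  intros Hu HL.
  set (m := Rmin x (-2)).
  apply Rmult_le_reg_l with u; [exact Hu|].
  replace (u * (- 2 * L + 10 / u * m ^ 2)) with (u * (- 2 * L) + 10 * m ^ 2)
    by (field; lra).
  assert (Hsquare : u * (- (u / 4) * L ^ 2 + - x * L)
                    = u * (- 2 * L) + (x - 2) ^ 2 - (u * L / 2 + (x - 2)) ^ 2)
    by field.
  pose proof (pow2_ge_0 (u * L / 2 + (x - 2))).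
  pose proof (pow2_ge_0 m).
  destruct (Rle_dec 2 x) as [Hx | Hx].
  -
    assert (0 <= (x - 2) * (u * L)) by (apply Rmult_le_pos; nra).
    nra.
  -
    assert ((x - 2) ^ 2 <= 10 * m ^ 2).
    { unfold m, Rmin; destruct (Rle_dec x (-2)); nra. }
    lra.
Qed.

Lemma exp_le_compat (u v : R) : u <= v -> exp u <= exp v.
Proof.
  intros [Hlt | ->]; [left; apply exp_increasing, Hlt | apply Rle_refl].
Qed.

Lemma Ftilde_term_bound (a : nat -> C) (t x : R) (n : nat) : t < 0 ->
  0 <= Ftilde_term a t x n <=
  exp (10 / Rabs t * (Rmin x (-2)) ^ 2) * Cmod (dirichlet_term a (RtoC 2) n).
Proof.
  intros Ht.
  unfold RtoC; rewrite Cmod_dirichlet_term.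
  unfold Ftilde_term, Rpower.
  set (L := ln (INR (S n))).
  assert (HL : 0 <= L).
  { unfold L; rewrite <- ln_1. apply ln_le; [lra|].
    rewrite S_INR; pose proof (pos_INR n); lra. }
  assert (Hu : 0 < Rabs t) by (apply Rabs_pos_lt; lra).
  pose proof (Cmod_ge_0 (a (S n))) as Ha.
  split.
  - pose proof (exp_pos (- (Rabs t / 4) * L ^ 2)).
    pose proof (exp_pos (- x * L)).
    apply Rmult_le_pos; [apply Rmult_le_pos|]; lra.
  - rewrite (Rmult_comm (exp _) (Cmod _)), Rmult_assoc, <- exp_plus.
    rewrite (Rmult_comm (exp _)), Rmult_assoc, <- exp_plus.
    apply Rmult_le_compat_l; [exact Ha|].
    apply exp_le_compat.
    pose proof (gaussian_exponent_bound (Rabs t) L x Hu HL); lra.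
Qed.

Lemma Series_dominated (f g : nat -> R) (c : R) :
  (forall n, 0 <= f n <= c * g n) -> ex_series g ->
  ex_series f /\ Series f <= c * Series g.
Proof.
  intros Hfg Hg.
  assert (Hcg : ex_series (fun n => c * g n)) by exact (ex_series_scal_l c g Hg).
  split.
  - apply (@ex_series_le R_AbsRing R_CompleteNormedModule _ (fun n => c * g n));
      [intros n | exact Hcg].
    destruct (Hfg n) as [H0 H1].
    change (Rabs (f n) <= c * g n). rewrite Rabs_pos_eq; assumption.
  - rewrite <- Series_scal_l. apply Series_le; assumption.
Qed.

Lemma norm_is_series_le {K : AbsRing} {V : NormedModule K}
  (f : nat -> V) (g : nat -> R) (v : V) :
  is_series f v -> (forall n, norm (f n) <= g n) -> ex_series g ->
  norm v <= Series g.
Proof.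
  intros Hf Hfg Hg.
  assert (Hlim : Rbar_le (norm v) (Series g)).
  { apply (is_lim_seq_le (fun N => norm (sum_n f N)) (sum_n g)).
    - intros N. unfold sum_n. eapply Rle_trans; [apply norm_sum_n_m|].
      apply sum_n_m_le, Hfg.
    - eapply filterlim_comp; [exact Hf | apply filterlim_norm].
    - apply Series_correct, Hg. }
  exact Hlim.
Qed.

Theorem mainTheorem11 (a : nat -> C) (HF : in_Selberg_ext a) (Cc : R) (HC : 0 < Cc) :
  exists K : R, 0 < K /\
    forall t x : R, - Cc <= t < 0 ->
      (ex_series (Ftilde_term a t x) /\
       Ftilde a t x <= K * exp (10 / Rabs t * (Rmin x (-2))^2)) /\
      (forall (y : R), exists v : C,
         @is_series C_AbsRing C_NormedModule (Ft_term a t (x, y)) v /\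
         Cmod v <= K * exp (10 / Rabs t * (Rmin x (-2))^2)).
Proof.
  destruct HF as [Habs _].
  set (b := fun n => Cmod (dirichlet_term a (RtoC 2) n)).
  assert (Hb : ex_series b) by (apply Habs; simpl; lra).
  set (K := Rmax 1 (Series b)).
  assert (HK : Series b <= K) by apply Rmax_r.
  exists K; split; [apply Rlt_le_trans with 1; [lra | apply Rmax_l]|].
  intros t x [_ Ht].
  set (E := exp (10 / Rabs t * Rmin x (-2) ^ 2)).
  pose proof (exp_pos (10 / Rabs t * Rmin x (-2) ^ 2)) as HE; fold E in HE.
  destruct (Series_dominated (Ftilde_term a t x) b E
              (fun n => Ftilde_term_bound a t x n Ht) Hb) as [Hex Hle].
  assert (Hbound : Ftilde a t x <= K * E) by (unfold Ftilde; nra).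
  split; [split; assumption|].
  intros y.
  assert (Hnorm : forall n, norm (Ft_term a t (x, y) n) <= Ftilde_term a t x n)
    by (intros n; rewrite <- (Cmod_Ft_term a t x y n); apply Rle_refl).
  destruct (@ex_series_le C_AbsRing C_CompleteNormedModule _ _ Hnorm Hex) as [v Hv].
  exists v; split; [exact Hv|].
  apply Rle_trans with (Ftilde a t x); [|exact Hbound].
  exact (norm_is_series_le _ _ v Hv Hnorm Hex).
Qed.
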